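(* Let $q$ be an odd prime power, $\omega$ a non-square in $\mathbb F_q$, $\epsilon\in\mathbb F_{q^2}$ with $\epsilon^2=\omega$, and write $z=z_1+\epsilon z_2$ ($z_i\in\mathbb F_q$) for $z\in\mathbb F_{q^2}$. Let $\mathcal C: aX^2+bXY+cXZ+dYZ+eZ^2=0$ be a non-singular conic of $\mathrm{PG}(2,q^2)$ with $d=1$, $b\notin\mathbb F_q$, and $-bcd+ad^2+b^2e$ a nonzero square in $\mathbb F_{q^2}$. Put $A=-a_2b_1+a_1b_2$, $B=b_2c_1-b_1c_2-a_2d_1+a_1d_2$, $C=-c_2d_1+c_1d_2+b_2e_1-b_1e_2$, $D=d_2e_1-d_1e_2$, and let $\mathcal S\subset\mathrm{PG}(3,q)$ be the cubic surface in coordinates $(t_1:t_2:X:Z)$ with equation $$2t_1t_2(b_1X+d_1Z)-(t_1^2+\omega t_2^2)(b_2X+d_2Z)+AX^3+BX^2Z+CXZ^2+DZ^3=0.$$ Let $\mathcal S_q$ be the number of points of $\mathrm{PG}(3,q)$ on $\mathcal S$, and $n_0$, $n_\infty$ the numbers of those with $t_1=t_2=0$ and with $X=Z=0$ respectively. Then $E_q(\mathcal C)=\frac12(\mathcal S_q-n_0-n_\infty)$.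
   Context: $E_q(\mathcal C)$ is the number of points of $\mathrm{PG}(2,q)$ (canonically embedded in $\mathrm{PG}(2,q^2)$) which are external to $\mathcal C$, i.e. lie on two tangent lines of $\mathcal C$. *)

From HB Require Import structures.
From mathcomp Require Import all_boot all_order all_algebra all_field.
Set Implicit Arguments. Unset Strict Implicit. Unset Printing Implicit Defensive.
Import Order.TTheory GRing.Theory Num.Theory.
Local Open Scope ring_scope.

(* Projective points of PG(n-1,K): canonical representatives, i.e. nonzero
   row vectors whose first nonzero coordinate equals 1. *)
Definition pnormal (K : fieldType) (n : nat) (v : 'rV[K]_n) : bool :=
  [exists i : 'I_n, (v ord0 i == 1) && [forall j : 'I_n, (j < i)%N ==> (v ord0 j == 0)]].

Definition crd (K : Type) (n : nat) (v : 'rV[K]_n.+1) (k : nat) : K := v ord0 (inord k).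

Definition incident (K : fieldType) (l P : 'rV[K]_3) : bool :=
  \sum_(i < 3) l ord0 i * P ord0 i == 0.

Section Conic.
Variables (L : fieldType) (a b c d e : L).

Definition conicF (v : 'rV[L]_3) : L :=
  let x := crd v 0 in let y := crd v 1 in let z := crd v 2 in
  a * x ^+ 2 + b * x * y + c * x * z + d * y * z + e * z ^+ 2.

Definition conicFX (v : 'rV[L]_3) : L :=
  2%:R * a * crd v 0 + b * crd v 1 + c * crd v 2.
Definition conicFY (v : 'rV[L]_3) : L := b * crd v 0 + d * crd v 2.
Definition conicFZ (v : 'rV[L]_3) : L :=
  c * crd v 0 + d * crd v 1 + 2%:R * e * crd v 2.

Definition conic_nonsingular : Prop :=
  forall v : 'rV[L]_3, pnormal v ->
    ~ [/\ conicF v = 0, conicFX v = 0, conicFY v = 0 & conicFZ v = 0].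
End Conic.

Section Count.
Variables (F L : finFieldType) (iota : {rmorphism F -> L}) (a b c d e : L).

Definition tangent_line (l : 'rV[L]_3) : bool :=
  #|[set Q : 'rV[L]_3 | [&& pnormal Q, conicF a b c d e Q == 0 & incident l Q]]| == 1%N.

Definition external_point (P : 'rV[F]_3) : bool :=
  #|[set l : 'rV[L]_3 | [&& pnormal l, tangent_line l & incident l (map_mx iota P)]]| == 2%N.

Definition Eq_count : nat :=
  #|[set P : 'rV[F]_3 | pnormal P && external_point P]|.
End Count.

Section Surface.
Variables (F : finFieldType) (omega b1 b2 d1 d2 A B C D : F).

Definition surfF (v : 'rV[F]_4) : F :=
  let t1 := crd v 0 in let t2 := crd v 1 in let X := crd v 2 in let Z := crd v 3 in
  2%:R * t1 * t2 * (b1 * X + d1 * Z) - (t1 ^+ 2 + omega * t2 ^+ 2) * (b2 * X + d2 * Z)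
  + A * X ^+ 3 + B * X ^+ 2 * Z + C * X * Z ^+ 2 + D * Z ^+ 3.

Definition surf_points : {set 'rV[F]_4} :=
  [set v : 'rV[F]_4 | pnormal v && (surfF v == 0)].

Definition Sq : nat := #|surf_points|.
Definition n0 : nat := #|[set v in surf_points | (crd v 0 == 0) && (crd v 1 == 0)]|.
Definition ninf : nat := #|[set v in surf_points | (crd v 2 == 0) && (crd v 3 == 0)]|.
End Surface.

From HB Require Import structures.
From mathcomp Require Import all_boot all_order all_algebra all_field.
From mathcomp Require Import ring.
Import GRing.Theory.
Local Open Scope ring_scope.
Set Implicit Arguments. Unset Strict Implicit. Unset Printing Implicit Defensive.

(* Since 2 != 0, completing the square turns C into the conic x^2 + yz, whose
   tangents are the zeros of a quadratic form in line coordinates.  Counting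
   the tangents through a point P then shows that P is external exactly when
   the form Q of C takes a nonzero square value at P, so 2 (q - 1) E_q(C)
   counts the pairs (w, u) with w in F_q^3, u in F_{q^2}^* and u^2 = Q(w).
   Writing u = t1 + eps t2 and w = (X, Y, Z), the equation u^2 = Q(w) splits
   into two F_q-equations that are linear in Y (as d = 1); a solution Y exists
   iff their resultant, the cubic form of S, vanishes at (t1 : t2 : X : Z), and
   it is then unique.  As u != 0 forces (X, Z) != 0, these pairs are the
   affine points of S with (t1, t2) != 0 and (X, Z) != 0, and there are
   (q - 1) (S_q - n_0 - n_inf) of them. *)

Lemma odd_card_natr2_neq0 (K : finFieldType) : odd #|K| -> (2%:R : K) != 0.
Proof.
apply: contraTN => two0.
have pchar2 : 2%N \in [pchar K] by rewrite inE two0.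
have cardK : #|K| = (2 ^ logn 2 #|K|)%N := card_pprimeChar pchar2.
rewrite cardK oddX orbF; apply: contraTN (finNzRing_gt1 K) => /eqP log0.
by rewrite cardK log0.
Qed.

Section ProjectivePoints.
Variables (K : fieldType) (n : nat).
Implicit Types (v w : 'rV[K]_n) (k m : K).

Lemma pnormal_neq0 v : pnormal v -> v != 0.
Proof.
case/existsP => i /andP [/eqP vi _]; apply: contra_eq_neq vi => ->.
by rewrite mxE eq_sym oner_eq0.
Qed.

Lemma pnormal_scale_inj v w k m : pnormal v -> pnormal w -> k != 0 -> m != 0 ->
  k *: v = m *: w -> k = m /\ v = w.
Proof.
case/existsP => i /andP [/eqP vi /forallP v_lt_i].
case/existsP => j /andP [/eqP wj /forallP w_lt_j] k0 m0 kv_mw.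
have coordE t : k * v ord0 t = m * w ord0 t by move/rowP: kv_mw => /(_ t); rewrite !mxE.
have ij : i = j.
  case: (ltngtP i j) => [lt_ij|lt_ji|/val_inj //].
  - have /eqP w0 := implyP (w_lt_j i) lt_ij.
    by move: (coordE i); rewrite vi w0 mulr1 mulr0 => /eqP; rewrite (negbTE k0).
  - have /eqP v0 := implyP (v_lt_i j) lt_ji.
    by move: (coordE j); rewrite wj v0 mulr1 mulr0 => /eqP; rewrite eq_sym (negbTE m0).
subst j; have km : k = m by move: (coordE i); rewrite vi wj !mulr1.
by split => //; apply: (scalerI k0); rewrite kv_mw km.
Qed.

Lemma pnormalizable v : v != 0 -> exists2 k, k != 0 & pnormal (k^-1 *: v).
Proof.
move=> v0; have [i0 vi0] : exists i, v ord0 i != 0.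
  apply/existsP; apply: contraR v0 => /existsPn v_eq0.
  by apply/eqP/rowP => j; rewrite mxE; apply/eqP; rewrite -[_ == _]negbK v_eq0.
have [i vi i_min] := @arg_minnP _ i0 (fun i => v ord0 i != 0) val vi0.
exists (v ord0 i) => //; apply/existsP; exists i; rewrite mxE mulVf // eqxx /=.
apply/forallP => j; apply/implyP => ji; rewrite mxE.
have [->|vj] := eqVneq (v ord0 j) 0; first by rewrite mulr0.
by have := i_min j vj; rewrite leqNgt ji.
Qed.

End ProjectivePoints.

Lemma card_nonzero (K : finFieldType) : #|[set k : K | k != 0]| = #|K|.-1.
Proof. by rewrite -(cardC1 0); apply: eq_card => x; rewrite !inE. Qed.

Lemma card_pnormal (K : finFieldType) n (P : pred 'rV[K]_n) :
  (forall k v, k != 0 -> P (k *: v) = P v) ->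
  (#|[set v | pnormal v && P v]| * #|K|.-1 = #|[set v | (v != 0%R) && P v]|)%N.
Proof.
move=> PZ; set A := [set v | _ && _]; set U := [set k : K | k != 0].
have -> : [set v | (v != 0) && P v] = (fun p => p.2 *: p.1) @: setX A U.
  apply/setP => u; rewrite inE; apply/andP/imsetP => [[u0 Pu]|].
    have [k k0 nu] := pnormalizable u0.
    exists (k^-1 *: u, k); last by rewrite /= scalerA mulfV // scale1r.
    by rewrite !inE nu PZ ?invr_eq0 // Pu k0.
  case=> -[v k]; rewrite !inE /= => /andP [/andP [nv Pv] k0] ->.
  by rewrite scaler_eq0 negb_or k0 pnormal_neq0 // PZ.
rewrite -card_nonzero -cardsX; apply/esym/card_in_imset => -[v k] [w m].
rewrite !inE /= => /andP [/andP [nv _] k0] /andP [/andP [nw _] m0] /esym vw.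
by have [-> ->] := pnormal_scale_inj nw nv m0 k0 vw.
Qed.

Lemma card_units_gt0 (K : finFieldType) : (0 < #|K|.-1)%N.
Proof. by rewrite -subn1 subn_gt0 finNzRing_gt1. Qed.

Lemma card_pnormal_eq (K : finFieldType) n (P : pred 'rV[K]_n) m :
  (forall k v, k != 0 -> P (k *: v) = P v) ->
  (#|[set v | pnormal v && P v]| == m) =
  (#|[set v | (v != 0%R) && P v]| == #|K|.-1 * m)%N.
Proof. by move=> /card_pnormal <-; rewrite mulnC eqn_pmul2l ?card_units_gt0. Qed.

Section Coordinates.
Variable K : Type.

Definition coords3 (v : 'rV[K]_3) : K * K * K := (crd v 0, crd v 1, crd v 2).
Definition row3 (w : K * K * K) : 'rV[K]_3 := \row_(i < 3) nth w.2 [:: w.1.1; w.1.2; w.2] i.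
Definition coords4 (v : 'rV[K]_4) : K * K * K * K := (crd v 0, crd v 1, crd v 2, crd v 3).
Definition row4 (w : K * K * K * K) : 'rV[K]_4 :=
  \row_(i < 4) nth w.2 [:: w.1.1.1; w.1.1.2; w.1.2; w.2] i.

Lemma row3K : cancel row3 coords3.
Proof. by case=> [[x y] z]; rewrite /coords3 /crd !mxE !inordK. Qed.

Lemma coords3K : cancel coords3 row3.
Proof.
move=> v; apply/rowP => -[[|[|[|j]]] lt_j3] //; rewrite mxE /crd /=;
  by congr (v ord0 _); apply: val_inj; rewrite /= inordK.
Qed.

Lemma row4K : cancel row4 coords4.
Proof. by case=> [[[x y] z] t]; rewrite /coords4 /crd !mxE !inordK. Qed.

Lemma coords4K : cancel coords4 row4.
Proof.
move=> v; apply/rowP => -[[|[|[|[|j]]]] lt_j4] //; rewrite mxE /crd /=;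
  by congr (v ord0 _); apply: val_inj; rewrite /= inordK.
Qed.

End Coordinates.

Lemma card_coords3 (K : finType) (P : pred (K * K * K)) :
  #|[set v : 'rV[K]_3 | P (coords3 v)]| = #|[set w | P w]|.
Proof.
rewrite -[RHS](card_imset _ (can_inj (@row3K K))) (can2_imset_pre _ (@row3K K) (@coords3K K)).
by apply: eq_card => v; rewrite !inE.
Qed.

Lemma card_coords4 (K : finType) (P : pred (K * K * K * K)) :
  #|[set v : 'rV[K]_4 | P (coords4 v)]| = #|[set w | P w]|.
Proof.
rewrite -[RHS](card_imset _ (can_inj (@row4K K))) (can2_imset_pre _ (@row4K K) (@coords4K K)).
by apply: eq_card => v; rewrite !inE.
Qed.

Lemma coords3_eq0 (K : nmodType) (v : 'rV[K]_3) : (coords3 v == (0, 0, 0)) = (v == 0).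
Proof.
apply/eqP/eqP => [v0|->]; last by rewrite /coords3 /crd !mxE.
by rewrite -[v]coords3K v0; apply/rowP => -[[|[|[|j]]] lt_j3]; rewrite !mxE.
Qed.

Lemma coords4_eq0 (K : nmodType) (v : 'rV[K]_4) : (coords4 v == (0, 0, 0, 0)) = (v == 0).
Proof.
apply/eqP/eqP => [v0|->]; last by rewrite /coords4 /crd !mxE.
by rewrite -[v]coords4K v0; apply/rowP => -[[|[|[|[|j]]]] lt_j4]; rewrite !mxE.
Qed.

Lemma crdZ (K : pzRingType) n (k : K) (v : 'rV[K]_n.+1) i : crd (k *: v) i = k * crd v i.
Proof. by rewrite /crd mxE. Qed.

Lemma crd_map (K L : Type) (f : K -> L) n (v : 'rV[K]_n.+1) i :
  crd (map_mx f v) i = f (crd v i).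
Proof. by rewrite /crd mxE. Qed.

Definition dot3 (K : pzRingType) (l w : K * K * K) : K :=
  l.1.1 * w.1.1 + l.1.2 * w.1.2 + l.2 * w.2.

Lemma dot3C (K : comPzRingType) (l w : K * K * K) : dot3 l w = dot3 w l.
Proof. by rewrite /dot3 mulrC [l.1.2 * _]mulrC [l.2 * _]mulrC. Qed.

Lemma incidentE (K : fieldType) (l P : 'rV[K]_3) :
  incident l P = (dot3 (coords3 l) (coords3 P) == 0).
Proof.
rewrite /incident !big_ord_recr big_ord0 /= add0r /dot3 /coords3 /crd.
have -> : widen_ord (leqnSn 2) (widen_ord (leqnSn 1) ord_max) = inord 0 :> 'I_3.
  by apply: val_inj; rewrite /= inordK.
have -> : widen_ord (leqnSn 2) ord_max = inord 1 :> 'I_3 by apply: val_inj; rewrite /= inordK.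
by have -> : ord_max = inord 2 :> 'I_3 by apply: val_inj; rewrite /= inordK.
Qed.

Lemma conicF_scale (K : fieldType) (a b c d e k : K) (v : 'rV[K]_3) :
  conicF a b c d e (k *: v) = k ^+ 2 * conicF a b c d e v.
Proof. by rewrite /conicF !crdZ; ring. Qed.

Lemma incidentZl (K : fieldType) (l P : 'rV[K]_3) k : k != 0 ->
  incident (k *: l) P = incident l P.
Proof.
move=> k0; rewrite !incidentE.
have -> : dot3 (coords3 (k *: l)) (coords3 P) = k * dot3 (coords3 l) (coords3 P).
  by rewrite /dot3 /coords3 /= !crdZ; ring.
by rewrite mulf_eq0 (negbTE k0).
Qed.

Lemma incidentZr (K : fieldType) (l P : 'rV[K]_3) k : k != 0 ->
  incident l (k *: P) = incident l P.
Proof.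
move=> k0; rewrite !incidentE.
have -> : dot3 (coords3 l) (coords3 (k *: P)) = k * dot3 (coords3 l) (coords3 P).
  by rewrite /dot3 /coords3 /= !crdZ; ring.
by rewrite mulf_eq0 (negbTE k0).
Qed.

Definition issq (K : finFieldType) (x : K) : bool := [exists s, s ^+ 2 == x].

Lemma issq_sqr (K : finFieldType) (x : K) : issq (x ^+ 2).
Proof. by apply/existsP; exists x. Qed.

Lemma issq_sqrM (K : finFieldType) (k x : K) : k != 0 -> issq (k ^+ 2 * x) = issq x.
Proof.
move=> k0; apply/existsP/existsP => -[s /eqP sx].
  by exists (s / k); rewrite expr_div_n sx [_ * x]mulrC mulfK ?expf_neq0.
by exists (k * s); rewrite exprMn sx.
Qed.

Lemma card_linear_roots (K : finFieldType) (be ga : K) :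
  #|[set t : K | be * t + ga == 0]| = if be != 0 then 1%N else if ga == 0 then #|K| else 0%N.
Proof.
have [be0|be0] := eqVneq be 0 => /=.
  have [ga0|ga0] := eqVneq ga 0.
    by rewrite -cardsT; apply: eq_card => t; rewrite !inE be0 ga0 mul0r addr0 eqxx.
  by rewrite -[RHS](cards0 K); apply: eq_card => t; rewrite !inE be0 mul0r add0r (negbTE ga0).
rewrite -[RHS](cards1 (- ga / be)); apply: eq_card => t; rewrite !inE addr_eq0.
by apply/eqP/eqP => [<-|->]; rewrite mulrC ?mulKf ?divfK.
Qed.

Section SquareRoots.
Variable K : finFieldType.
Hypothesis two0 : (2%:R : K) != 0.

Lemma card_sqr_eq (x : K) :
  #|[set u : K | u ^+ 2 == x]| = if x == 0 then 1%N else if issq x then 2%N else 0%N.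
Proof.
have [->|x0] := eqVneq x 0.
  by rewrite -[RHS](cards1 (0 : K)); apply: eq_card => u; rewrite !inE sqrf_eq0.
case: (boolP (issq x)) => [/existsP [s /eqP sx]|nsq_x].
  have s_neq_ns : s != - s.
    rewrite -subr_eq0 opprK -mulr2n -mulr_natr mulf_eq0 negb_or two0 andbT.
    by apply: contra_neq x0 => s0; rewrite -sx s0 expr0n.
  rewrite (_ : [set u | _] = [set s; - s]) ?cards2 ?s_neq_ns //.
  by apply/setP => u; rewrite !inE -sx eqf_sqr.
rewrite -[RHS](cards0 K); apply: eq_card => u; rewrite !inE.
by apply: contraNF nsq_x => ux; apply/existsP; exists u.
Qed.

Lemma card_sqr_eq_neq0 (x : K) :
  #|[set u : K | (u != 0) && (u ^+ 2 == x)]| = if (x != 0) && issq x then 2%N else 0%N.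
Proof.
have [->|x0] := eqVneq x 0.
  by rewrite -[RHS](cards0 K); apply: eq_card => u; rewrite !inE sqrf_eq0 andNb.
transitivity #|[set u : K | u ^+ 2 == x]|; last by rewrite card_sqr_eq (negbTE x0).
apply: eq_card => u; rewrite !inE.
by case: eqVneq => // ->; rewrite expr0n eq_sym (negbTE x0).
Qed.

Lemma card_quadratic_roots (al be ga : K) : al != 0 ->
  #|[set t : K | al * t ^+ 2 + be * t + ga == 0]| =
  #|[set u : K | u ^+ 2 == be ^+ 2 - 4%:R * al * ga]|.
Proof.
move=> al0; have four0 : (4%:R : K) != 0 by rewrite (natrM K 2 2) mulf_neq0.
have shift_inj : injective (fun t : K => 2%:R * al * t + be).
  by move=> t t' /addIr /mulfI; apply; rewrite mulf_neq0.
rewrite -[RHS](card_preimset _ shift_inj); apply: eq_card => t; rewrite !inE -[RHS]subr_eq0.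
have -> : (2%:R * al * t + be) ^+ 2 - (be ^+ 2 - 4%:R * al * ga) =
          4%:R * al * (al * t ^+ 2 + be * t + ga) by ring.
by rewrite mulf_eq0 (negbTE (mulf_neq0 four0 al0)).
Qed.

End SquareRoots.

Section ConePlane.
Variables (K : finFieldType) (ka : K) (p : K * K * K).
Hypothesis ka0 : ka != 0.

Definition cone_plane : {set K * K * K} :=
  [set w | [&& w != (0, 0, 0), w.1.1 ^+ 2 + ka * w.1.2 * w.2 == 0 & dot3 p w == 0]].

Lemma card_cone_plane_affine : #|cone_plane :&: [set w | w.2 != 0]| =
  (#|K|.-1 * #|[set t : K | (- p.1.2 / ka * t ^+ 2 + p.1.1 * t + p.2 == 0)%R]|)%N.
Proof.
rewrite /cone_plane /dot3; case: p => [[p0 p1] p2] /=.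
rewrite -card_nonzero -cardsX; set U := [set k : K | _]; set R := [set t : K | _].
pose f (lt : K * K) := (lt.1 * lt.2, - lt.1 * lt.2 ^+ 2 / ka, lt.1).
have f_inj : {in setX U R &, injective f}.
  move=> [l t] [l' t']; rewrite !inE /= => /andP [l0 _] _ [lt_eq _ ll'].
  by rewrite -ll' in lt_eq *; rewrite (mulfI l0 lt_eq).
rewrite -(card_in_imset f_inj); apply: eq_card => -[[x y] z]; rewrite !inE /=.
apply/andP/imsetP => [[/and3P [_ /eqP cone /eqP plane] z0]|].
  have kyz : ka * y * z = - x ^+ 2 by apply/eqP; rewrite -addr_eq0 addrC cone.
  have y_eq : y = - x ^+ 2 / (ka * z) by rewrite -kyz; field; rewrite ?z0 ?ka0.
  exists (z, x / z); last by rewrite /f /= y_eq; congr (_, _, _); field; rewrite ?z0 ?ka0.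
  rewrite !inE z0 /=.
  have -> : - p1 / ka * (x / z) ^+ 2 + p0 * (x / z) + p2 = (p0 * x + p1 * y + p2 * z) / z.
    by rewrite y_eq; field; rewrite ?z0 ?ka0.
  by rewrite plane mul0r.
case=> -[l t]; rewrite !inE /= => /andP [l0 /eqP root] [-> -> ->].
split=> //; rewrite !xpair_eqE (negbTE l0) andbF /=; apply/andP; split; apply/eqP.
  by field.
by rewrite -[RHS](mulr0 l) -root; field.
Qed.

Lemma card_cone_plane_infinity : #|cone_plane :\: [set w | w.2 != 0]| =
  (#|K|.-1 * (p.1.2 == 0%R))%N.
Proof.
rewrite /cone_plane /dot3; case: p => [[p0 p1] p2] /=.
have point_z0 x y z : ~~ (z != 0) &&
    [&& (x, y, z) != (0, 0, 0), x ^+ 2 + ka * y * z == 0 & p0 * x + p1 * y + p2 * z == 0] ->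
    [/\ x = 0, z = 0 & y != 0].
  case/andP => /negPn /eqP -> /and3P [nz /eqP cone _].
  have x0 : x = 0 by apply/eqP; rewrite -sqrf_eq0 -cone mulr0 addr0.
  by move: nz; rewrite x0 !xpair_eqE !eqxx andbT.
have [p1_0|p1_0] := eqVneq p1 0; rewrite ?muln1 ?muln0.
  have g_inj : injective (fun y : K => (0, y, 0) : K * K * K) by move=> y y' /= [].
  rewrite -card_nonzero -(card_imset _ g_inj); apply: eq_card => -[[x y] z]; rewrite !inE /=.
  apply/idP/imsetP => [/point_z0 [-> -> y0]|[y' y0 [-> -> ->]]].
    by exists y; rewrite ?inE.
  rewrite inE in y0; rewrite !xpair_eqE !eqxx (negbTE y0) p1_0 /=.
  by rewrite expr2 !(mulr0, mul0r, addr0) eqxx.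
rewrite -[RHS](cards0 (K * K * K)%type); apply: eq_card => -[[x y] z]; rewrite !inE /=.
apply/negP => hw; have [x0 z0 y0] := point_z0 x y z hw.
by move: hw; rewrite x0 z0 !(mulr0, addr0, add0r) (negbTE (mulf_neq0 p1_0 y0)) !andbF.
Qed.

Lemma card_cone_plane : (2%:R : K) != 0 -> p != (0, 0, 0) ->
  #|cone_plane| =
  (#|K|.-1 * #|[set u : K | (u ^+ 2 == p.1.1 ^+ 2 + 4%:R * p.1.2 * p.2 / ka)%R]|)%N.
Proof.
move=> two0 p_neq0; rewrite -(cardsID [set w | w.2 != 0]) card_cone_plane_affine.
rewrite card_cone_plane_infinity -mulnDr; move: p_neq0; case: p => [[p0 p1] p2] /= p_neq0.
congr (_ * _)%N; have [p1_0|p1_0] := eqVneq p1 0.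
  rewrite p1_0 addn1 card_sqr_eq // !(mulr0, mul0r, addr0) sqrf_eq0.
  rewrite (eq_card (B := [set t | p0 * t + p2 == 0])) => [|t]; last first.
    by rewrite !inE oppr0 !mul0r add0r.
  rewrite card_linear_roots issq_sqr; have [p0_0|//] := eqVneq p0 0.
  by move: p_neq0; rewrite p0_0 p1_0 !xpair_eqE !eqxx /= => /negbTE ->.
rewrite /= addn0 card_quadratic_roots ?mulf_neq0 ?oppr_eq0 ?invr_eq0 //.
by apply: eq_card => u; rewrite !inE; congr (_ == _); field.
Qed.

End ConePlane.

Section Tangents.
Variables (L : finFieldType) (a b c e s : L).
Hypothesis two0 : (2%:R : L) != 0.
Hypothesis s0 : s != 0.
Hypothesis sqr_s : s ^+ 2 = - b * c + a + b ^+ 2 * e.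

(* The factor [1] makes [conicF a b c 1 e] convertible to [cform \o coords3]. *)
Definition cform (w : L * L * L) : L :=
  a * w.1.1 ^+ 2 + b * w.1.1 * w.1.2 + c * w.1.1 * w.2 + 1 * w.1.2 * w.2 + e * w.2 ^+ 2.

Lemma conicF_cform v : conicF a b c 1 e v = cform (coords3 v).
Proof. by []. Qed.

(* Obtained by completing the square, using [sqr_s]. *)
Definition std_to_conic (w : L * L * L) : L * L * L :=
  (w.1.1 / s, w.1.2 - (c - e * b) * (w.1.1 / s) - e * (w.2 - b * (w.1.1 / s)),
   w.2 - b * (w.1.1 / s)).

Definition conic_to_std (w : L * L * L) : L * L * L :=
  (s * w.1.1, w.1.2 + (c - e * b) * w.1.1 + e * w.2, b * w.1.1 + w.2).

(* The contragredient maps, acting on line coordinates. *)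
Definition line_to_dual (l : L * L * L) : L * L * L :=
  ((l.1.1 - c * l.1.2 + 2%:R * b * e * l.1.2 - b * l.2) / s, l.1.2, l.2 - e * l.1.2).

Definition dual_to_line (m : L * L * L) : L * L * L :=
  (s * m.1.1 + c * m.1.2 - 2%:R * b * e * m.1.2 + b * (m.2 + e * m.1.2), m.1.2,
   m.2 + e * m.1.2).

Lemma std_to_conicK : cancel std_to_conic conic_to_std.
Proof. by move=> [[x y] z]; rewrite /std_to_conic /conic_to_std /=; congr (_, _, _); field. Qed.

Lemma conic_to_stdK : cancel conic_to_std std_to_conic.
Proof. by move=> [[x y] z]; rewrite /std_to_conic /conic_to_std /=; congr (_, _, _); field. Qed.

Lemma line_to_dualK : cancel line_to_dual dual_to_line.
Proof. by move=> [[x y] z]; rewrite /line_to_dual /dual_to_line /=; congr (_, _, _); field. Qed.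

Lemma dual_to_lineK : cancel dual_to_line line_to_dual.
Proof. by move=> [[x y] z]; rewrite /line_to_dual /dual_to_line /=; congr (_, _, _); field. Qed.

Lemma std_to_conic_eq0 w : (std_to_conic w == (0, 0, 0)) = (w == (0, 0, 0)).
Proof.
rewrite (can2_eq std_to_conicK conic_to_stdK) /conic_to_std /=.
by rewrite !(mulr0, addr0).
Qed.

Lemma conic_to_std_eq0 w : (conic_to_std w == (0, 0, 0)) = (w == (0, 0, 0)).
Proof.
rewrite (can2_eq conic_to_stdK std_to_conicK) /std_to_conic /=.
by rewrite !(mul0r, mulr0, subr0).
Qed.

Lemma dual_to_line_eq0 m : (dual_to_line m == (0, 0, 0)) = (m == (0, 0, 0)).
Proof.
rewrite (can2_eq dual_to_lineK line_to_dualK) /line_to_dual /=.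
by rewrite !(mulr0, subr0, addr0, mul0r).
Qed.

Lemma cform_std w : cform (std_to_conic w) = w.1.1 ^+ 2 + w.1.2 * w.2.
Proof.
case: w => [[x y] z]; rewrite /cform /std_to_conic /=.
have -> : x ^+ 2 = s ^+ 2 * (x / s) ^+ 2 by field.
by rewrite sqr_s; field.
Qed.

Lemma dot3_std l w : dot3 l (std_to_conic w) = dot3 (line_to_dual l) w.
Proof. by case: l w => [[? ?] ?] [[? ?] ?]; rewrite /dot3 /=; field. Qed.

Lemma dot3_dual m w : dot3 (dual_to_line m) w = dot3 m (conic_to_std w).
Proof. by case: m w => [[? ?] ?] [[? ?] ?]; rewrite /dot3 /=; ring. Qed.

Definition tangent_disc (l : L * L * L) : L :=
  (line_to_dual l).1.1 ^+ 2 + 4%:R * (line_to_dual l).1.2 * (line_to_dual l).2.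

Lemma card_conic_line (l : 'rV[L]_3) : l != 0 ->
  #|[set v : 'rV[L]_3 | (v != 0) && ((conicF a b c 1 e v == 0) && incident l v)]| =
  (#|L|.-1 * #|[set u : L | u ^+ 2 == tangent_disc (coords3 l)]|)%N.
Proof.
move=> l0; set l' := coords3 l.
have -> : #|[set v | (v != 0) && ((conicF a b c 1 e v == 0) && incident l v)]| =
          #|[set w | [&& w != (0, 0, 0), cform w == 0 & dot3 l' w == 0]]|.
  rewrite -card_coords3; apply: eq_card => v.
  by rewrite !inE coords3_eq0 conicF_cform incidentE.
rewrite -(card_preimset _ (can_inj std_to_conicK)).
have -> : #|std_to_conic @^-1: [set w | [&& w != (0, 0, 0), cform w == 0 & dot3 l' w == 0]]| =
          #|cone_plane 1 (line_to_dual l')|.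
  by apply: eq_card => w; rewrite !inE std_to_conic_eq0 cform_std mul1r dot3_std.
rewrite card_cone_plane ?oner_neq0 ?divr1 //.
by rewrite (can2_eq line_to_dualK dual_to_lineK) /dual_to_line /= !(mulr0, addr0, subr0) coords3_eq0.
Qed.

Lemma tangent_lineZ (l : 'rV[L]_3) k : k != 0 ->
  tangent_line a b c 1 e (k *: l) = tangent_line a b c 1 e l.
Proof.
move=> k0; rewrite /tangent_line; congr (#|pred_of_set _| == _).
by apply/setP => Q; rewrite !inE incidentZl.
Qed.

Lemma tangent_lineE (l : 'rV[L]_3) : l != 0 ->
  tangent_line a b c 1 e l = (tangent_disc (coords3 l) == 0).
Proof.
move=> l0; rewrite {1}/tangent_line card_pnormal_eq => [|k v k0]; last first.
  by rewrite /= conicF_scale mulf_eq0 expf_eq0 /= (negbTE k0) incidentZr.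
rewrite card_conic_line // eqn_pmul2l ?card_units_gt0 // card_sqr_eq //.
by case: (_ == 0) => //; case: issq.
Qed.

Lemma card_tangents_through (P : 'rV[L]_3) : P != 0 ->
  #|[set l : 'rV[L]_3 | (l != 0) && (tangent_line a b c 1 e l && incident l P)]| =
  (#|L|.-1 * #|[set u : L | u ^+ 2 == cform (coords3 P)]|)%N.
Proof.
move=> P0; set P' := coords3 P.
have -> : #|[set l | (l != 0) && (tangent_line a b c 1 e l && incident l P)]| =
          #|[set l | [&& l != (0, 0, 0), tangent_disc l == 0 & dot3 l P' == 0]]|.
  rewrite -card_coords3; apply: eq_card => l; rewrite !inE coords3_eq0 incidentE.
  by case: eqVneq => //= l0; rewrite tangent_lineE.
rewrite -(card_preimset _ (can_inj dual_to_lineK)).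
have -> : #|dual_to_line @^-1: [set l | [&& l != (0, 0, 0), tangent_disc l == 0
                                          & dot3 l P' == 0]]| =
          #|cone_plane 4%:R (conic_to_std P')|.
  apply: eq_card => m; rewrite !inE dual_to_line_eq0 /tangent_disc dual_to_lineK dot3_dual.
  by rewrite dot3C.
have four0 : (4%:R : L) != 0 by rewrite (natrM L 2 2) mulf_neq0.
rewrite card_cone_plane ?conic_to_std_eq0 ?coords3_eq0 //.
rewrite -[cform P'](congr1 cform (conic_to_stdK P')) cform_std.
by congr (_ * _)%N; apply: eq_card => u; rewrite !inE; congr (_ == _); field.
Qed.

Lemma tangents_through_eq2 (P : 'rV[L]_3) : P != 0 ->
  (#|[set l | [&& pnormal l, tangent_line a b c 1 e l & incident l P]]| == 2) =
  (cform (coords3 P) != 0) && issq (cform (coords3 P)).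
Proof.
move=> P0; rewrite card_pnormal_eq => [|k l k0]; last by rewrite tangent_lineZ // incidentZl.
rewrite card_tangents_through // eqn_pmul2l ?card_units_gt0 // card_sqr_eq //.
by case: (_ == 0) => //; case: issq.
Qed.

End Tangents.

Lemma surfF_scale (F : finFieldType) (omega b1 b2 d1 d2 A B C D k : F) (v : 'rV[F]_4) :
  surfF omega b1 b2 d1 d2 A B C D (k *: v) = k ^+ 3 * surfF omega b1 b2 d1 d2 A B C D v.
Proof. by rewrite /surfF !crdZ; ring. Qed.

Section SurfacePoints.
Variables (F : finFieldType) (omega b1 b2 d1 d2 A B C D : F).
Local Notation SP := (surf_points omega b1 b2 d1 d2 A B C D).
Local Notation surf := (surfF omega b1 b2 d1 d2 A B C D).

Definition surf_points_proper : {set 'rV[F]_4} :=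
  [set v in SP | ((crd v 0, crd v 1) != (0, 0)) && ((crd v 2, crd v 3) != (0, 0))].

Lemma Sq_split : Sq omega b1 b2 d1 d2 A B C D =
  (n0 omega b1 b2 d1 d2 A B C D + ninf omega b1 b2 d1 d2 A B C D + #|surf_points_proper|)%N.
Proof.
set N0 := [set v : 'rV[F]_4 | (crd v 0 == 0) && (crd v 1 == 0)].
set Ninf := [set v : 'rV[F]_4 | (crd v 2 == 0) && (crd v 3 == 0)].
have n0E : n0 omega b1 b2 d1 d2 A B C D = #|SP :&: N0| by apply: eq_card => v; rewrite !inE.
have ninfE : ninf omega b1 b2 d1 d2 A B C D = #|(SP :\: N0) :&: Ninf|.
  apply: eq_card => v; rewrite !inE.
  case: (boolP (pnormal v)) => [/pnormal_neq0|]; last by rewrite !andbF.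
  rewrite -coords4_eq0 !xpair_eqE /=.
  by case: (crd v 0 == 0); case: (crd v 1 == 0); case: (crd v 2 == 0); case: (crd v 3 == 0);
    case: (surf v == 0).
have properE : #|surf_points_proper| = #|(SP :\: N0) :\: Ninf|.
  apply: eq_card => v; rewrite !inE !xpair_eqE.
  by rewrite andbC [RHS]andbA [~~ _ && ~~ _]andbC.
by rewrite n0E ninfE properE -addnA !cardsID.
Qed.

Lemma card_surf_points_proper : (#|surf_points_proper| * #|F|.-1 =
  #|[set w : F * F * F * F | ([&& surf (row4 w) == 0, (w.1.1.1, w.1.1.2) != (0, 0)
                                 & (w.1.2, w.2) != (0, 0)])%R]|)%N.
Proof.
set P := fun v : 'rV[F]_4 =>
  [&& surf v == 0, (crd v 0, crd v 1) != (0, 0) & (crd v 2, crd v 3) != (0, 0)].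
rewrite (eq_card (B := [set v | pnormal v && P v])) => [|v]; last first.
  by rewrite !inE /P -!andbA.
rewrite card_pnormal => [|k v k0]; last first.
  by rewrite /P surfF_scale !crdZ !xpair_eqE !mulf_eq0 (negbTE k0).
rewrite -card_coords4; apply: eq_card => v; rewrite !inE coords4K.
by case: eqP => [->|] //=; rewrite /crd !mxE eqxx !andbF.
Qed.

End SurfacePoints.

Lemma card_set_pairs (T1 T2 : finType) (R : T1 -> T2 -> bool) :
  #|[set p : T1 * T2 | R p.1 p.2]| = (\sum_(x : T1) #|[set y | R x y]|)%N.
Proof.
rewrite -sum1_card (eq_bigl (fun p : T1 * T2 => predT p.1 && R p.1 p.2)) => [|p]; last first.
  by rewrite inE.
rewrite -(pair_big_dep predT R (fun _ _ => 1%N)).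
by apply: eq_bigr => x _; rewrite -sum1_card; apply: eq_bigl => y; rewrite inE.
Qed.

Definition lin_sol (K : fieldType) (u1 u2 w1 w2 : K) : K :=
  if u2 != 0 then w2 / u2 else w1 / u1.

Lemma lin_solP (K : fieldType) (u1 u2 w1 w2 y : K) : (u1, u2) != (0, 0) ->
  (y * u1 == w1) && (y * u2 == w2) = (u1 * w2 == u2 * w1) && (y == lin_sol u1 u2 w1 w2).
Proof.
rewrite /lin_sol xpair_eqE; have [->|u2_0] := eqVneq u2 0 => /= [u1_0|_].
  rewrite andbT in u1_0; rewrite mulr0 mul0r mulf_eq0 (negbTE u1_0) /= andbC.
  by congr (_ && _); [rewrite eq_sym | apply/eqP/eqP => [<-|->]; rewrite ?mulfK ?divfK].
apply/andP/andP => [[/eqP <- /eqP <-]|[/eqP u12 /eqP ->]]; first by split; apply/eqP; field.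
split; apply/eqP; last by rewrite divfK.
by apply: (mulIf u2_0); rewrite mulrAC divfK // mulrC u12 mulrC.
Qed.

Section QuadraticExtension.
Variables (F L : finFieldType) (iota : {rmorphism F -> L}) (omega : F) (eps : L).
Hypothesis omega_nonsq : forall x : F, x ^+ 2 != omega.
Hypothesis sqr_eps : eps ^+ 2 = iota omega.

Definition qext (t : F * F) : L := iota t.1 + eps * iota t.2.

Lemma qext_eq0 t : (qext t == 0) = (t == (0, 0)).
Proof.
case: t => x y; rewrite /qext xpair_eqE /=.
have [->|y0] := eqVneq y 0; first by rewrite rmorph0 mulr0 addr0 fmorph_eq0 andbT.
rewrite andbF; apply/negP => /eqP sum0.
have iy : iota y != 0 by rewrite fmorph_eq0.
have eps_eq : eps = iota (- x / y).
  rewrite fmorph_div rmorphN; apply: (mulIf iy); rewrite divfK //.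
  by apply/eqP; rewrite -addr_eq0 addrC sum0.
by move: (omega_nonsq (- x / y)); rewrite -(inj_eq (fmorph_inj iota)) rmorphXn -eps_eq sqr_eps eqxx.
Qed.

Lemma qext_inj : injective qext.
Proof.
move=> [x y] [x' y'] /eqP; rewrite -subr_eq0.
have -> : qext (x, y) - qext (x', y') = qext (x - x', y - y') by rewrite /qext /= !rmorphB; ring.
by rewrite qext_eq0 xpair_eqE !subr_eq0 => /andP [/eqP -> /eqP ->].
Qed.

Lemma qext_surj : #|L| = (#|F| ^ 2)%N -> forall u, exists t, qext t = u.
Proof.
move=> cardL u; have /codomP [t ->] : u \in codom qext.
  by apply: (inj_card_onto qext_inj); rewrite card_prod cardL mulnn.
by exists t.
Qed.

End QuadraticExtension.

Section ExternalPointsAndSurface.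
Variables (F L : finFieldType) (iota : {rmorphism F -> L}) (omega : F) (eps : L).
Hypothesis cardL : #|L| = (#|F| ^ 2)%N.
Hypothesis omega_nonsq : forall x : F, x ^+ 2 != omega.
Hypothesis sqr_eps : eps ^+ 2 = iota omega.
Hypothesis two0 : (2%:R : F) != 0.
Variables (a b c e s : L) (a1 a2 b1 b2 c1 c2 d1 d2 e1 e2 : F).
Hypotheses (Ha : a = qext iota eps (a1, a2)) (Hb : b = qext iota eps (b1, b2)).
Hypotheses (Hc : c = qext iota eps (c1, c2)) (He : e = qext iota eps (e1, e2)).
Hypotheses (d1_eq1 : d1 = 1) (d2_eq0 : d2 = 0) (b2_neq0 : b2 != 0).
Hypotheses (s0 : s != 0) (sqr_s : s ^+ 2 = - b * c + a + b ^+ 2 * e).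

Let two0L : (2%:R : L) != 0. Proof. by rewrite -(rmorph_nat iota) fmorph_eq0. Qed.

Definition conic_at (w : F * F * F) : L := cform a b c e (iota w.1.1, iota w.1.2, iota w.2).

Lemma external_pointE (P : 'rV[F]_3) : pnormal P ->
  external_point iota a b c 1 e P = (conic_at (coords3 P) != 0) && issq (conic_at (coords3 P)).
Proof.
move=> /pnormal_neq0 P0; rewrite /external_point (tangents_through_eq2 two0L s0 sqr_s) ?map_mx_eq0 //.
by rewrite /coords3 !crd_map.
Qed.

Definition conic_sq_points : {set F * F * F} :=
  [set w | (conic_at w != 0) && issq (conic_at w)].

Lemma Eq_count_affine : (Eq_count iota a b c 1%R e * #|F|.-1)%N = #|conic_sq_points|.
Proof.
set ext := fun w => (conic_at w != 0) && issq (conic_at w).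
rewrite /Eq_count (eq_card (B := [set P | pnormal P && ext (coords3 P)])) => [|P]; last first.
  by rewrite !inE; case: (boolP (pnormal P)) => // /external_pointE ->.
rewrite card_pnormal => [|k v k0]; last first.
  rewrite /ext; have -> : conic_at (coords3 (k *: v)) = iota k ^+ 2 * conic_at (coords3 v).
    by rewrite /conic_at /coords3 /cform /= !crdZ !rmorphM; ring.
  by rewrite issq_sqrM ?mulf_eq0 ?expf_eq0 /= ?fmorph_eq0 // (negbTE k0).
rewrite -card_coords3; apply: eq_card => v; rewrite !inE /ext.
case: eqVneq => [->|] //=; rewrite /conic_at /coords3 /cform /crd !mxE rmorph0.
by rewrite /= !(expr2, mulr0, addr0) eqxx.
Qed.

Lemma card_sqrt_pairs :
  #|[set p : F * F * F * L | (p.2 != 0) && (p.2 ^+ 2 == conic_at p.1)]| =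
  (2 * #|conic_sq_points|)%N.
Proof.
rewrite (card_set_pairs (fun w u => (u != 0) && (u ^+ 2 == conic_at w))).
under eq_bigr => w _ do rewrite card_sqr_eq_neq0 //.
rewrite -big_mkcond /= sum_nat_const mulnC.
by congr (_ * _)%N; apply: eq_card => w; rewrite inE.
Qed.

Definition beta1 (X Z : F) : F := b1 * X + d1 * Z.
Definition beta2 (X Z : F) : F := b2 * X + d2 * Z.
Definition rhs1 (t1 t2 X Z : F) : F :=
  t1 ^+ 2 + omega * t2 ^+ 2 - (a1 * X ^+ 2 + c1 * X * Z + e1 * Z ^+ 2).
Definition rhs2 (t1 t2 X Z : F) : F := 2%:R * t1 * t2 - (a2 * X ^+ 2 + c2 * X * Z + e2 * Z ^+ 2).

(* Comparing coordinates in the basis (1, eps): the equation is linear in y because d = 1. *)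
Lemma sqr_qext_eq (t1 t2 X y Z : F) :
  (qext iota eps (t1, t2) ^+ 2 == conic_at (X, y, Z)) =
  (y * beta1 X Z == rhs1 t1 t2 X Z) && (y * beta2 X Z == rhs2 t1 t2 X Z).
Proof.
rewrite eq_sym -subr_eq0.
have -> : conic_at (X, y, Z) - qext iota eps (t1, t2) ^+ 2 =
          qext iota eps (y * beta1 X Z - rhs1 t1 t2 X Z, y * beta2 X Z - rhs2 t1 t2 X Z).
  rewrite /conic_at /cform Ha Hb Hc He /qext /beta1 /beta2 /rhs1 /rhs2 /= d1_eq1 d2_eq0.
  rewrite !(rmorphB, rmorphD, rmorphM, rmorphXn, rmorph_nat, rmorph1, rmorph0) -sqr_eps.
  ring.
by rewrite (qext_eq0 omega_nonsq sqr_eps) xpair_eqE !subr_eq0.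
Qed.

Definition surfA := - a2 * b1 + a1 * b2.
Definition surfB := b2 * c1 - b1 * c2 - a2 * d1 + a1 * d2.
Definition surfC := - c2 * d1 + c1 * d2 + b2 * e1 - b1 * e2.
Definition surfD := d2 * e1 - d1 * e2.
Local Notation surf := (surfF omega b1 b2 d1 d2 surfA surfB surfC surfD).

(* The cubic form of S is the resultant of the two linear equations in y. *)
Lemma surfF_row4 t1 t2 X Z :
  surf (row4 (t1, t2, X, Z)) = beta1 X Z * rhs2 t1 t2 X Z - beta2 X Z * rhs1 t1 t2 X Z.
Proof.
rewrite /surfF /crd !mxE !inordK //= /surfA /surfB /surfC /surfD /beta1 /beta2 /rhs1 /rhs2.
ring.
Qed.

Lemma beta_neq0 X Z : (X, Z) != (0, 0) -> (beta1 X Z, beta2 X Z) != (0, 0).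
Proof.
rewrite /beta1 /beta2 d1_eq1 d2_eq0 !xpair_eqE mul0r addr0 mul1r mulf_eq0 (negbTE b2_neq0) /=.
apply: contraNN => /andP [/eqP b1XZ0 /eqP X0].
by move: b1XZ0; rewrite X0 mulr0 add0r => ->; rewrite eqxx.
Qed.

Lemma card_sqrt_pairs_surface :
  #|[set p : F * F * F * L | (p.2 != 0) && (p.2 ^+ 2 == conic_at p.1)]| =
  #|[set w : F * F * F * F | [&& surf (row4 w) == 0, (w.1.1.1, w.1.1.2) != (0, 0)
                                & (w.1.2, w.2) != (0, 0)]]|.
Proof.
set T := [set w : F * F * F * F | _].
pose y_of t1 t2 X Z := lin_sol (beta1 X Z) (beta2 X Z) (rhs1 t1 t2 X Z) (rhs2 t1 t2 X Z).
pose g (w : F * F * F * F) :=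
  ((w.1.2, y_of w.1.1.1 w.1.1.2 w.1.2 w.2, w.2), qext iota eps (w.1.1.1, w.1.1.2)).
have g_inj : injective g.
  move=> [[[t1 t2] X] Z] [[[t1' t2'] X'] Z'] [-> _ -> /(qext_inj omega_nonsq sqr_eps)].
  by case=> -> ->.
rewrite -(card_imset T g_inj); apply: eq_card => -[[[X y] Z] u]; rewrite !inE /=.
have [[t1 t2] <-] := qext_surj omega_nonsq sqr_eps cardL u.
rewrite (qext_eq0 omega_nonsq sqr_eps).
have [[-> ->]|XZ0] := eqVneq (X, Z) (0, 0).
  have -> : conic_at (0, y, 0) = 0 by rewrite /conic_at /cform /= rmorph0; ring.
  rewrite sqrf_eq0 (qext_eq0 omega_nonsq sqr_eps) andNb; apply/esym/imsetP.
  case=> -[[[t1' t2'] X'] Z']; rewrite inE /= => /and3P [_ _ XZ'] [X'0 _ Z'0 _].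
  by rewrite -X'0 -Z'0 eqxx in XZ'.
rewrite sqr_qext_eq lin_solP ?beta_neq0 //.
apply/andP/imsetP => [[t0 /andP [res /eqP ->]]|[w]].
  by exists (t1, t2, X, Z) => //; rewrite inE /= surfF_row4 subr_eq0 res t0 XZ0.
case: w => [[[t1' t2'] X'] Z']; rewrite inE /= surfF_row4 subr_eq0 => /and3P [res t0 _].
by case=> -> -> -> /(qext_inj omega_nonsq sqr_eps) [-> ->]; rewrite t0 res eqxx.
Qed.

Lemma surface_count : Sq omega b1 b2 d1 d2 surfA surfB surfC surfD =
  (n0 omega b1 b2 d1 d2 surfA surfB surfC surfD + ninf omega b1 b2 d1 d2 surfA surfB surfC surfD
   + 2 * Eq_count iota a b c 1%R e)%N.
Proof.
rewrite Sq_split; congr (_ + _)%N; apply/eqP.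
rewrite -(eqn_pmul2r (card_units_gt0 F)) card_surf_points_proper -card_sqrt_pairs_surface.
by rewrite card_sqrt_pairs -Eq_count_affine mulnA.
Qed.

End ExternalPointsAndSurface.

Theorem mainTheorem7
  (F L : finFieldType) (iota : {rmorphism F -> L})
  (HoddF : odd #|F|) (HcardL : #|L| = (#|F| ^ 2)%N)
  (omega : F) (Homega : forall x : F, x ^+ 2 != omega)
  (eps : L) (Heps : eps ^+ 2 = iota omega)
  (a b c d e : L) (a1 a2 b1 b2 c1 c2 d1 d2 e1 e2 : F)
  (Ha : a = iota a1 + eps * iota a2) (Hb : b = iota b1 + eps * iota b2)
  (Hc : c = iota c1 + eps * iota c2) (Hd : d = iota d1 + eps * iota d2)
  (He : e = iota e1 + eps * iota e2)
  (Hnonsing : conic_nonsingular a b c d e)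
  (Hd1 : d = 1)
  (Hbq : forall x : F, b != iota x)
  (Hsq : (- b * c * d + a * d ^+ 2 + b ^+ 2 * e != 0) /\
         exists s : L, - b * c * d + a * d ^+ 2 + b ^+ 2 * e = s ^+ 2) :
  let A := - a2 * b1 + a1 * b2 in
  let B := b2 * c1 - b1 * c2 - a2 * d1 + a1 * d2 in
  let C := - c2 * d1 + c1 * d2 + b2 * e1 - b1 * e2 in
  let D := d2 * e1 - d1 * e2 in
  ((Eq_count iota a b c d e)%:R : rat) =
    ((Sq omega b1 b2 d1 d2 A B C D)%:R - (n0 omega b1 b2 d1 d2 A B C D)%:R
      - (ninf omega b1 b2 d1 d2 A B C D)%:R) / 2%:R.
Proof.
move=> A B C D.
have [d1_eq1 d2_eq0] : d1 = 1 /\ d2 = 0.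
  have : qext iota eps (d1 - 1, d2) == 0 by rewrite /qext /= rmorphB rmorph1 addrAC -Hd Hd1 subrr.
  by rewrite (qext_eq0 Homega Heps) xpair_eqE !subr_eq0 => /andP [/eqP -> /eqP ->].
have b2_neq0 : b2 != 0.
  by apply: contra_neq (Hbq b1) => b2_eq0; rewrite Hb b2_eq0 rmorph0 mulr0 addr0.
have [s sqr_s s0] : exists2 s : L, s ^+ 2 = - b * c + a + b ^+ 2 * e & s != 0.
  case: Hsq => disc0 [s disc_s]; exists s; first by rewrite -disc_s Hd1; ring.
  by apply: contra_neq disc0 => s0; rewrite disc_s s0 expr0n.
rewrite {}/A {}/B {}/C {}/D Hd1 (surface_count HcardL Homega Heps (odd_card_natr2_neq0 HoddF)
  Ha Hb Hc He d1_eq1 d2_eq0 b2_neq0 s0 sqr_s) /surfA /surfB /surfC /surfD !natrD.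
by field.
Qed.
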